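(* Let $\mathcal{H}$ be a complex Hilbert space, let $N(\cdot)$ be a norm on $\mathbb{B}(\mathcal{H})$, and let $T\in\mathbb{B}(\mathcal{H})$. Then $$w_{N}(T) \leq \inf_{\varphi \in \mathbb{R}}\sqrt{N^2\big({\rm Re}(e^{i\varphi}T)\big) + N^2\big({\rm Im}(e^{i\varphi}T)\big)}.$$
   Context: $\mathbb{B}(\mathcal{H})$ is the algebra of bounded linear operators on $\mathcal{H}$. For $A\in\mathbb{B}(\mathcal{H})$, ${\rm Re}(A)=\frac{A+A^*}{2}$ and ${\rm Im}(A)=\frac{A-A^*}{2i}$. For a norm $N(\cdot)$ on $\mathbb{B}(\mathcal{H})$, the generalized numerical radius is $w_N(T)=\sup_{\theta\in\mathbb{R}} N\big({\rm Re}(e^{i\theta}T)\big)$. *)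

From HB Require Import structures.
From mathcomp Require Import all_boot all_order all_algebra.
From mathcomp Require Import all_classical all_reals all_analysis.
From mathcomp Require Import complex.
Set Implicit Arguments. Unset Strict Implicit. Unset Printing Implicit Defensive.
Import Order.TTheory GRing.Theory Num.Theory.
Local Open Scope ring_scope.
Local Open Scope classical_set_scope.

Section Hilbert.
Variables (R : realType) (V : lmodType (complex R)).
Local Notation C := (complex R).

Definition is_inner_product (ip : V -> V -> C) : Prop :=
  [/\ (forall (a : C) (x y z : V), ip (a *: x + y) z = a * ip x z + ip y z),
      (forall x y : V, ip y x = conjc (ip x y)),
      (forall x : V, complex.Im (ip x x) = 0 /\ 0 <= complex.Re (ip x x))
    & (forall x : V, ip x x = 0 -> x = 0)].

Definition ipnorm (ip : V -> V -> C) (x : V) : R := Num.sqrt (complex.Re (ip x x)).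

Definition ip_complete (ip : V -> V -> C) : Prop :=
  forall u : nat -> V,
    (forall e : R, 0 < e -> exists N : nat, forall m n : nat,
        (N <= m)%N -> (N <= n)%N -> ipnorm ip (u m - u n) < e) ->
    exists l : V, forall e : R, 0 < e -> exists N : nat, forall n : nat,
        (N <= n)%N -> ipnorm ip (u n - l) < e.

Definition is_hilbert (ip : V -> V -> C) : Prop :=
  is_inner_product ip /\ ip_complete ip.

Definition bounded_op (ip : V -> V -> C) (A : V -> V) : Prop :=
  (forall (a : C) (x y : V), A (a *: x + y) = a *: A x + A y) /\
  (exists M : R, forall x : V, ipnorm ip (A x) <= M * ipnorm ip x).

Definition is_adjoint (ip : V -> V -> C) (A As : V -> V) : Prop :=
  forall x y : V, ip (A x) y = ip x (As y).

Definition op_add (A B : V -> V) : V -> V := fun x => A x + B x.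
Definition op_scale (c : C) (A : V -> V) : V -> V := fun x => c *: A x.

Definition is_op_norm (ip : V -> V -> C) (N : (V -> V) -> R) : Prop :=
  [/\ (forall A B, bounded_op ip A -> bounded_op ip B ->
         N (op_add A B) <= N A + N B),
      (forall (c : C) A, bounded_op ip A -> N (op_scale c A) = Normc.normc c * N A),
      (forall A, bounded_op ip A -> 0 <= N A)
    & (forall A, bounded_op ip A -> N A = 0 -> A = (fun _ => 0))].

Definition op_Re (A As : V -> V) : V -> V :=
  fun x => (2%:R : C)^-1 *: (A x + As x).
Definition op_Im (A As : V -> V) : V -> V :=
  fun x => (2%:R * Complex 0 1 : C)^-1 *: (A x - As x).

Definition expi (t : R) : C := Complex (cos t) (sin t).

(* generalized numerical radius w_N(T) = sup_theta N(Re(e^{i theta} T)),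
   where (e^{i theta} T)^* = e^{-i theta} T^* *)
Definition w_N (N : (V -> V) -> R) (T Ts : V -> V) : \bar R :=
  ereal_sup [set (N (op_Re (op_scale (expi t) T) (op_scale (conjc (expi t)) Ts)))%:E
            | t in [set: R]].

End Hilbert.

(* For all angles t and p,
   Re(e^{it}T) = cos(t - p) Re(e^{ip}T) - sin(t - p) Im(e^{ip}T),
   so the triangle inequality for N and the Cauchy-Schwarz inequality in R^2
   bound N(Re(e^{it}T)) by sqrt(N^2(Re(e^{ip}T)) + N^2(Im(e^{ip}T))).
   As N is only a norm on bounded operators, one also needs that the adjoint
   of a bounded operator is bounded; this is shown with the quadratic form
   q(x) = Re<x,x> and the inequality 2 Re<x,y> <= t q(x) + q(y)/t. *)

From HB Require Import structures.
From mathcomp Require Import all_boot all_order all_algebra.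
From mathcomp Require Import all_classical all_reals all_analysis.
From mathcomp Require Import complex.
From mathcomp Require Import ring lra.
Set Implicit Arguments. Unset Strict Implicit. Unset Printing Implicit Defensive.
Import Order.TTheory GRing.Theory Num.Theory.
Local Open Scope ring_scope.
Local Open Scope classical_set_scope.

Lemma op_Re_scale (R : realType) (V : lmodType (complex R))
    (z : complex R) (A B : V -> V) :
  op_Re (op_scale z A) (op_scale (conjc z) B) =
  op_add (op_scale (complex.Re z)%:C%C (op_Re A B))
         (op_scale (- complex.Im z)%:C%C (op_Im A B)).
Proof.
apply: funext => x; rewrite /op_Re /op_Im /op_add /op_scale.
rewrite !scalerDr !scalerN !scalerA addrACA -scalerDl -scaleNr -scalerDl.
have i_neq0 : Complex 0 1 != 0 :> complex R by rewrite eq_complex /= oner_eq0 andbF.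
have two_neq0 : 2%:R != 0 :> complex R by rewrite pnatr_eq0.
congr (_ *: _ + _ *: _); rewrite rmorphN /= ReJ_add ImJ_sub; field => //.
Qed.

Lemma expiD (R : realType) (a b : R) : expi (a + b) = expi a * expi b.
Proof.
by rewrite /expi cosD sinD; apply/eqP; rewrite eq_complex /= [sin a * _ + _]addrC !eqxx.
Qed.

Lemma normc_real (R : realType) (c : R) : Normc.normc c%:C%C = `|c|.
Proof. by rewrite /Normc.normc /= expr0n addr0 sqrtr_sqr. Qed.

Lemma cauchy_schwarz2 (R : realType) (a b x y : R) :
  a * x + b * y <= Num.sqrt ((a ^+ 2 + b ^+ 2) * (x ^+ 2 + y ^+ 2)).
Proof.
apply: le_trans (ler_norm _) _; rewrite -sqrtr_sqr ler_wsqrtr //.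
have := sqr_ge0 (a * y - b * x); nra.
Qed.

Section InnerProduct.
Variables (R : realType) (V : lmodType (complex R)) (ip : V -> V -> complex R).
Hypothesis ipP : is_inner_product ip.
Local Notation q x := (complex.Re (ip x x)).
Local Notation op_add := (@op_add R V).
Local Notation op_scale := (@op_scale R V).

Lemma ip_linl (a : complex R) x y z : ip (a *: x + y) z = a * ip x z + ip y z.
Proof. by case: ipP. Qed.

Lemma ip_conj x y : ip y x = conjc (ip x y).
Proof. by case: ipP. Qed.

Lemma ip_linr (a : complex R) x y z : ip x (a *: y + z) = conjc a * ip x y + ip x z.
Proof. by rewrite ip_conj ip_linl rmorphD rmorphM /= -!ip_conj. Qed.

Lemma ip0l z : ip 0 z = 0.
Proof. by have := ip_linl (-1) z z z; rewrite scaleN1r addNr mulN1r addNr. Qed.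

Lemma ip0r z : ip z 0 = 0.
Proof. by rewrite ip_conj ip0l rmorph0. Qed.

Lemma ip_addl x y z : ip (x + y) z = ip x z + ip y z.
Proof. by rewrite -[x in LHS]scale1r ip_linl mul1r. Qed.

Lemma ip_addr x y z : ip x (y + z) = ip x y + ip x z.
Proof. by rewrite -[y in LHS]scale1r ip_linr rmorph1 mul1r. Qed.

Lemma ip_scalel (a : complex R) x z : ip (a *: x) z = a * ip x z.
Proof. by rewrite -[a *: x]addr0 ip_linl ip0l addr0. Qed.

Lemma ip_scaler (a : complex R) x z : ip x (a *: z) = conjc a * ip x z.
Proof. by rewrite -[a *: z]addr0 ip_linr ip0r addr0. Qed.

Lemma Re_ipC x y : complex.Re (ip y x) = complex.Re (ip x y).
Proof. by rewrite ip_conj; case: (ip x y). Qed.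

Lemma Im_ip_self x : complex.Im (ip x x) = 0.
Proof. by case: ipP => _ _ /(_ x) []. Qed.

Lemma Re_ip_self_ge0 x : 0 <= q x.
Proof. by case: ipP => _ _ /(_ x) []. Qed.

Lemma ip_self_eq0 x : ip x x = 0 -> x = 0.
Proof. by case: ipP => _ _ _; apply. Qed.

Lemma Re_ip_selfD x y : q (x + y) = q x + q y + 2 * complex.Re (ip x y).
Proof. by rewrite ip_addl !ip_addr !raddfD /= (Re_ipC x y); ring. Qed.

Lemma Re_ip_selfZ (a : complex R) x :
  q (a *: x) = (complex.Re a ^+ 2 + complex.Im a ^+ 2) * q x.
Proof.
rewrite ip_scalel ip_scaler.
by move: (Im_ip_self x); case: (ip x x) => u v /= ->; case: a => a b /=; ring.
Qed.

Lemma Re_ipZl (t : R) x y :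
  complex.Re (ip (t%:C%C *: x) y) = t * complex.Re (ip x y).
Proof. by rewrite ip_scalel; case: (ip x y) => u v /=; rewrite mul0r subr0. Qed.

(* Expand [0 <= q (t x - y)] and divide by [t]. *)
Lemma Re_ip_le (t : R) x y :
  0 < t -> 2 * complex.Re (ip x y) <= t * q x + t^-1 * q y.
Proof.
move=> t_gt0; have := Re_ip_self_ge0 (t%:C%C *: x + (-1) *: y).
rewrite Re_ip_selfD !Re_ip_selfZ Re_ipZl ip_scaler rmorphN1 mulN1r /=.
rewrite expr0n /= !addr0 sqrrN expr1n oppr0 expr0n addr0 raddfN /= => h.
rewrite -(ler_pM2l t_gt0) mulrDr !mulrA mulfV ?gt_eqF // mul1r.
lra.
Qed.

Definition sqr_bounded (A : V -> V) :=
  exists2 K : R, 0 <= K & forall x, q (A x) <= K * q x.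

Lemma bounded_opP A : bounded_op ip A <-> linear A /\ sqr_bounded A.
Proof.
split=> [[linA [M AM]] | [linA [K K_ge0 AK]]]; split=> //.
  exists (Num.max M 0 ^+ 2) => [|x]; first exact: sqr_ge0.
  have M'_ge0 : 0 <= Num.max M 0 by rewrite le_max lexx orbT.
  rewrite -[q (A x)]sqr_sqrtr ?Re_ip_self_ge0 // -[q x]sqr_sqrtr ?Re_ip_self_ge0 //.
  rewrite -exprMn ler_sqr ?nnegrE ?sqrtr_ge0 ?mulr_ge0 //.
  apply: le_trans (AM x) _; apply: ler_wpM2r; first exact: sqrtr_ge0.
  by rewrite le_max lexx.
exists (Num.sqrt K) => x.
by rewrite /ipnorm -sqrtrM // ler_wsqrtr.
Qed.

Lemma sqr_bounded_add A B :
  sqr_bounded A -> sqr_bounded B -> sqr_bounded (op_add A B).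
Proof.
move=> [K K_ge0 AK] [L L_ge0 BL]; exists (2 * K + 2 * L) => [|x]; first lra.
have := Re_ip_le (A x) (B x) ltr01; rewrite invr1 !mul1r.
rewrite /op_add Re_ip_selfD; have := AK x; have := BL x; lra.
Qed.

Lemma sqr_bounded_scale c A : sqr_bounded A -> sqr_bounded (op_scale c A).
Proof.
have c_ge0 : 0 <= complex.Re c ^+ 2 + complex.Im c ^+ 2 by rewrite addr_ge0 ?sqr_ge0.
move=> [K K_ge0 AK]; exists ((complex.Re c ^+ 2 + complex.Im c ^+ 2) * K) => [|x].
  exact: mulr_ge0.
by rewrite /op_scale Re_ip_selfZ -mulrA ler_wpM2l.
Qed.

Lemma linear_op_add A B : linear A -> linear B -> linear (op_add A B).
Proof.
move=> linA linB a x y; rewrite /op_add linA linB scalerDr.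
by rewrite -!addrA; congr (_ + _); rewrite addrCA.
Qed.

Lemma linear_op_scale c A : linear A -> linear (op_scale c A).
Proof. by move=> linA a x y; rewrite /op_scale linA scalerDr !scalerA mulrC. Qed.

Lemma bounded_op_add A B :
  bounded_op ip A -> bounded_op ip B -> bounded_op ip (op_add A B).
Proof.
move=> /bounded_opP[linA bA] /bounded_opP[linB bB]; apply/bounded_opP.
by split; [apply: linear_op_add | apply: sqr_bounded_add].
Qed.

Lemma bounded_op_scale c A : bounded_op ip A -> bounded_op ip (op_scale c A).
Proof.
move=> /bounded_opP[linA bA]; apply/bounded_opP.
by split; [apply: linear_op_scale | apply: sqr_bounded_scale].
Qed.

Lemma bounded_op_Re A B :
  bounded_op ip A -> bounded_op ip B -> bounded_op ip (op_Re A B).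
Proof. by move=> bA bB; apply: bounded_op_scale; apply: bounded_op_add. Qed.

Lemma bounded_op_Im A B :
  bounded_op ip A -> bounded_op ip B -> bounded_op ip (op_Im A B).
Proof.
move=> bA bB.
have -> : op_Im A B = op_scale (2%:R * Complex 0 1)^-1 (op_add A (op_scale (-1) B)).
  by apply: funext => x; rewrite /op_Im /op_scale /op_add scaleN1r.
by apply: bounded_op_scale; apply: bounded_op_add => //; apply: bounded_op_scale.
Qed.

Lemma ip_injr u v : (forall x, ip x u = ip x v) -> u = v.
Proof.
move=> uv; apply/eqP; rewrite -subr_eq0; apply/eqP/ip_self_eq0.
by rewrite -scaleN1r ip_addr ip_scaler uv -ip_scaler -ip_addr scaleN1r subrr ip0r.
Qed.

Lemma adjoint_linear T Ts : is_adjoint ip T Ts -> linear Ts.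
Proof.
move=> adjT a x y; apply: ip_injr => z.
by rewrite -adjT ip_linr ip_addr ip_scaler !adjT.
Qed.

(* For [z = Ts y] and [L = K + 1]:
   [2 q z = 2 Re <T z, y> <= L^-1 q (T z) + L q y <= q z + L q y]. *)
Lemma adjoint_sqr_bounded T Ts :
  is_adjoint ip T Ts -> sqr_bounded T -> sqr_bounded Ts.
Proof.
move=> adjT [K K_ge0 TK]; have K1_gt0 : 0 < K + 1 by lra.
have K1V_gt0 : 0 < (K + 1)^-1 by rewrite invr_gt0.
exists (K + 1) => [|y]; first lra.
have := Re_ip_le (T (Ts y)) y K1V_gt0; rewrite adjT invrK.
have : q (T (Ts y)) <= (K + 1) * q (Ts y).
  by apply: le_trans (TK _) _; rewrite ler_wpM2r ?Re_ip_self_ge0 ?lerDl.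
rewrite -(ler_pM2l K1V_gt0) mulKf ?gt_eqF //.
lra.
Qed.

Lemma adjoint_bounded T Ts :
  bounded_op ip T -> is_adjoint ip T Ts -> bounded_op ip Ts.
Proof.
move=> /bounded_opP[_ bT] adjT; apply/bounded_opP.
by split; [apply: adjoint_linear adjT | apply: adjoint_sqr_bounded bT].
Qed.

End InnerProduct.

Section OpNorm.
Variables (R : realType) (V : lmodType (complex R)).
Variables (ip : V -> V -> complex R) (N : (V -> V) -> R).
Hypotheses (ipP : is_inner_product ip) (NP : is_op_norm ip N).

Lemma op_norm_rotation_le A B (c s : R) :
  bounded_op ip A -> bounded_op ip B -> c ^+ 2 + s ^+ 2 = 1 ->
  N (op_add (op_scale c%:C%C A) (op_scale s%:C%C B)) <=
  Num.sqrt (N A ^+ 2 + N B ^+ 2).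
Proof.
move=> bA bB cs; case: NP => Ntri Nhom N_ge0 _.
apply: le_trans (Ntri _ _ (bounded_op_scale ipP _ bA) (bounded_op_scale ipP _ bB)) _.
rewrite !Nhom // !normc_real.
apply: le_trans (cauchy_schwarz2 _ _ (N A) (N B)) _.
by rewrite !real_normK ?num_real // cs mul1r.
Qed.

Lemma op_norm_Re_expi_le T Ts (t p : R) :
  bounded_op ip T -> is_adjoint ip T Ts ->
  N (op_Re (op_scale (expi t) T) (op_scale (conjc (expi t)) Ts)) <=
  Num.sqrt
    (N (op_Re (op_scale (expi p) T) (op_scale (conjc (expi p)) Ts)) ^+ 2 +
     N (op_Im (op_scale (expi p) T) (op_scale (conjc (expi p)) Ts)) ^+ 2).
Proof.
move=> bT adjT; have bTs := adjoint_bounded ipP bT adjT.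
have expi_t : expi t = expi (t - p) * expi p by rewrite -expiD subrK.
set S := op_scale (expi p) T; set Ss := op_scale (conjc (expi p)) Ts.
have -> : op_scale (expi t) T = op_scale (expi (t - p)) S.
  by apply: funext => x; rewrite /op_scale scalerA expi_t.
have -> : op_scale (conjc (expi t)) Ts = op_scale (conjc (expi (t - p))) Ss.
  by apply: funext => x; rewrite /op_scale scalerA expi_t rmorphM.
have bS : bounded_op ip S by apply: bounded_op_scale.
have bSs : bounded_op ip Ss by apply: bounded_op_scale.
rewrite op_Re_scale; apply: op_norm_rotation_le.
- exact: bounded_op_Re.
- exact: bounded_op_Im.
- by rewrite /= sqrrN cos2Dsin2.
Qed.

End OpNorm.

Theorem theorem2p1 (R : realType) (V : lmodType (complex R))
  (ip : V -> V -> complex R) (N : (V -> V) -> R) (T Ts : V -> V) :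
  is_hilbert ip ->
  is_op_norm ip N ->
  bounded_op ip T ->
  is_adjoint ip T Ts ->
  (w_N N T Ts <=
   ereal_inf [set (Num.sqrt
       (N (op_Re (op_scale (expi p) T) (op_scale (conjc (expi p)) Ts)) ^+ 2 +
        N (op_Im (op_scale (expi p) T) (op_scale (conjc (expi p)) Ts)) ^+ 2))%:E
     | p in [set: R]])%E.
Proof.
move=> [ipP _] NP bT adjT.
apply: ge_ereal_sup => _ [t _ <-]; apply: le_ereal_inf_tmp => _ [p _ <-].
by rewrite lee_fin; exact: (op_norm_Re_expi_le ipP NP t p bT adjT).
Qed.
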